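(* Let $(X,\rho)$ be a separable metric space and let $T\colon X\to X$ be an aperiodic Borel automorphism. Then there exist a metrically universal Borel subset $\widehat X\subset X$ and a Borel measurable injective map $\Phi\colon \widehat X\to \mathcal{T}(\mathrm{UA})$ into the path space of the uniadic graph $\mathrm{UA}$ such that the adic shift $S$ is defined at every point of $\Phi(\widehat X)$ and $\Phi(Tx)=S(\Phi(x))$ for all $x\in\widehat X$.
   Context: A Borel automorphism of $X$ is an invertible map $T\colon X\to X$ such that $T$ and $T^{-1}$ are Borel measurable; it is aperiodic if it has no periodic points. $M_{\mathrm{ap}}(X,T)$ denotes the set of $T$-invariant aperiodic Borel probability measures on $X$ (i.e. invariant probability measures giving measure zero to the set of $T$-periodic points). A Borel set $\widehat X\subset X$ is metrically universal if $\mu(\widehat X)=1$ for every $\mu\in M_{\mathrm{ap}}(X,T)$. Graded graphs and adic shift: a graded graph has vertex set $\bigsqcup_{n\ge0}V_n$ with $V_0$ a single vertex, each $V_n$ finite, and (possibly multiple) edges only between $V_n$ and $V_{n+1}$; an adic structure is a linear order on the set of edges entering each vertex of level $n\ge1$ from level $n-1$. The path space $\mathcal{T}(\Gamma)$ is the set of infinite paths starting at the vertex of level $0$, going through one vertex of each level (a path is a sequence of edges $e_1,e_2,\dots$ with $e_n$ from level $n-1$ to level $n$), with the product Borel structure. Two paths are tail-equivalent if they coincide from some level on; on a tail-equivalence class the adic order is: for distinct paths $p,q$ coinciding after level $n$, with $n$ the largest level where they differ, $p<q$ iff the edge of $p$ entering its vertex at level $n$ is smaller than that of $q$ (they enter the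 same vertex, recursively compared; equivalently, compare lexicographically from the top differing level). The adic shift $S$ maps a path to its immediate successor in the adic order, defined on paths that are not maximal. The uniadic graph $\mathrm{UA}$: $V_0$ is a single vertex; given $V_n$, set $V_{n+1}=V_n^2\sqcup \mathrm{copy}(V_n)$. Each $w=(u,v)\in V_n^2$ receives two edges, from $u$ and from $v$, with the edge from $v$ declared greater than the edge from $u$; each $w\in\mathrm{copy}(V_n)$, a copy of $u\in V_n$, receives a single edge from $u$. *)

From HB Require Import structures.
From mathcomp Require Import all_boot all_order all_algebra.
From mathcomp Require Import all_classical all_reals all_analysis.
Set Implicit Arguments. Unset Strict Implicit. Unset Printing Implicit Defensive.
Import Order.TTheory GRing.Theory Num.Theory.
Local Open Scope classical_set_scope.
Local Open Scope ring_scope.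

Definition borel_set {X : topologicalType} (A : set X) : Prop :=
  <<s [set U : set X | open U] >> A.

Definition borel_fun {X : topologicalType} (f : X -> X) : Prop :=
  forall A : set X, borel_set A -> borel_set (f @^-1` A).

Definition separable_space (X : topologicalType) : Prop :=
  exists S : set X, countable S /\ dense S.

Definition borel_automorphism {X : topologicalType} (T : X -> X) : Prop :=
  borel_fun T /\
  exists Tinv : X -> X, [/\ cancel T Tinv, cancel Tinv T & borel_fun Tinv].

Definition periodic_points {X : Type} (T : X -> X) : set X :=
  [set x | exists n : nat, (0 < n)%N /\ iter n T x = x].

Definition aperiodic {X : Type} (T : X -> X) : Prop :=
  periodic_points T = set0.

(** Borel probability measures on X, written out as in MathComp-Analysis
    ([measure] + [probability]) but relative to the Borel sets of X.  (The
    library's [probability] requires a pointed carrier, which would exclude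
    the empty space; hence this literal unfolding.) *)
Definition borel_probability {R : realType} {X : topologicalType}
    (mu : set X -> \bar R) : Prop :=
  [/\ mu set0 = 0%E,
      (forall A, borel_set A -> (0 <= mu A)%E),
      (forall F : nat -> set X, (forall i, borel_set (F i)) ->
          trivIset setT F ->
          (fun n => (\sum_(0 <= i < n) mu (F i))%E) @ \oo --> mu (\bigcup_n F n)) &
      mu setT = 1%E].

Definition invariant_aperiodic_prob {R : realType} {X : topologicalType}
    (T : X -> X) (mu : set X -> \bar R) : Prop :=
  [/\ borel_probability mu,
      (forall A : set X, borel_set A -> mu (T @^-1` A) = mu A) &
      mu (periodic_points T) = 0%E].

Definition metrically_universal {R : realType} {X : topologicalType}
    (T : X -> X) (Xh : set X) : Prop :=
  forall mu : set X -> \bar R,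
    invariant_aperiodic_prob T mu -> mu Xh = 1%E.

Fixpoint UAV (n : nat) : Type :=
  match n with
  | 0 => unit
  | n'.+1 => ((UAV n' * UAV n') + UAV n')%type
  end.

(** Edges from level n to level n+1:
    [inl ((u,v), false)] is the edge from u into (u,v),
    [inl ((u,v), true)]  is the edge from v into (u,v),
    [inr u]              is the unique edge from u into copy(u). *)
Definition UAE (n : nat) : Type := (((UAV n * UAV n) * bool) + UAV n)%type.

Definition UA_src {n : nat} (e : UAE n) : UAV n :=
  match e with
  | inl ((u, v), b) => if b then v else u
  | inr u => u
  end.

Definition UA_tgt {n : nat} (e : UAE n) : UAV n.+1 :=
  match e with
  | inl (w, _) => inl w
  | inr u => inr u
  end.

Definition UA_edge_lt {n : nat} (e f : UAE n) : Prop :=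
  match e, f with
  | inl (w, false), inl (w', true) => w = w'
  | _, _ => False
  end.

Definition UApath : Type :=
  {p : forall n : nat, UAE n | forall n : nat, UA_src (p n.+1) = UA_tgt (p n)}.

Definition UAedge (p : UApath) (n : nat) : UAE n := proj1_sig p n.

Definition UA_cylinders : set (set UApath) :=
  [set A | exists (n : nat) (e : UAE n), A = [set p | UAedge p n = e]].

Definition UA_borel_set (A : set UApath) : Prop := <<s UA_cylinders >> A.

Definition adic_lt (p q : UApath) : Prop :=
  exists m : nat, (forall k, (m < k)%N -> UAedge p k = UAedge q k) /\
                  UA_edge_lt (UAedge p m) (UAedge q m).

Definition adic_shift_graph (p q : UApath) : Prop :=
  adic_lt p q /\ ~ (exists r, adic_lt p r /\ adic_lt r q).

Definition adic_shift_defined (p : UApath) : Prop :=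
  exists q, adic_shift_graph p q.

From HB Require Import structures.
From mathcomp Require Import all_boot all_order all_algebra.
From mathcomp Require Import all_classical all_reals all_analysis.
From mathcomp Require Import zify ring lra.
Set Implicit Arguments. Unset Strict Implicit. Unset Printing Implicit Defensive.
Import Order.TTheory GRing.Theory Num.Theory.
Local Open Scope classical_set_scope.

(* Nested Borel marker sets M_0 ⊇ M_1 ⊇ ... are built from a dense sequence:
   every orbit meets M_k with bounded gaps, and distinct points of M_(k+1) on
   an orbit are more than k+1 apart.  Hence their intersection meets each orbit
   at most once, and the union of the orbits through it is null for every
   invariant probability; Xhat is its complement.
   Each point of Xhat gets a natural-number label recording the largest k with
   x in M_k, the distance back to M_(k+1), and which of the first k basic balls
   contain the following iterates.  Along each orbit the labels are unbounded
   in both directions and two equal labels n enclose a label >= n, so the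
   points of label >= n cut the orbit into blocks which merge, one or two at a
   time, as n grows.  Recording these merges gives a path of UA on which T acts
   as the adic shift, and the ball data make this path determine the point. *)

Section BorelSets.
Variable X : topologicalType.
Implicit Types A B : set X.

Lemma borel_set0 : borel_set (@set0 X).
Proof. exact: sigma_algebra0. Qed.

Lemma borel_setC A : borel_set A -> borel_set (~` A).
Proof. by move=> hA; rewrite -setTD; apply: sigma_algebraCD. Qed.

Lemma borel_setT : borel_set (@setT X).
Proof. by rewrite -setC0; apply: borel_setC; exact: borel_set0. Qed.

Lemma borel_bigcup (F : nat -> set X) :
  (forall i, borel_set (F i)) -> borel_set (\bigcup_i F i).
Proof. exact: sigma_algebra_bigcup. Qed.

Lemma borel_bigcap (F : nat -> set X) :
  (forall i, borel_set (F i)) -> borel_set (\bigcap_i F i).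
Proof.
move=> hF; rewrite -[X in borel_set X]setCK setC_bigcap.
by apply: borel_setC; apply: borel_bigcup => i; exact: borel_setC.
Qed.

Lemma borel_setU A B : borel_set A -> borel_set B -> borel_set (A `|` B).
Proof.
move=> hA hB; have -> : A `|` B = \bigcup_i (if i == 0%N then A else B).
  apply/seteqP; split => x; first by case=> h; [exists 0%N | exists 1%N].
  by case=> -[|i] _ /=; [left|right].
by apply: borel_bigcup => -[|i].
Qed.

Lemma borel_setI A B : borel_set A -> borel_set B -> borel_set (A `&` B).
Proof.
move=> hA hB; rewrite -[X in borel_set X]setCK setCI.
by apply: borel_setC; apply: borel_setU; exact: borel_setC.
Qed.

Lemma borel_setD A B : borel_set A -> borel_set B -> borel_set (A `\` B).
Proof. by move=> hA hB; apply: borel_setI => //; exact: borel_setC. Qed.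

Lemma borel_open A : open A -> borel_set A.
Proof. exact: sub_sigma_algebra. Qed.

Lemma borel_exists (F : nat -> set X) :
  (forall k, borel_set (F k)) -> borel_set [set x | exists k, F k x].
Proof.
move=> hF; suff -> : [set x | exists k, F k x] = \bigcup_k F k by exact: borel_bigcup.
by apply/seteqP; split => x [k]; exists k.
Qed.

Lemma borel_forall_lt (m : nat) (F : nat -> set X) :
  (forall k, (k < m)%N -> borel_set (F k)) ->
  borel_set [set x | forall k, (k < m)%N -> F k x].
Proof.
move=> hF; have -> : [set x | forall k, (k < m)%N -> F k x] =
    \bigcap_k (if (k < m)%N then F k else setT).
  apply/seteqP; split => x /= h k; first by case: ifP => // /h.
  by move=> km; move: (h k I); rewrite km.
by apply: borel_bigcap => k; case: ifP => [/hF|_] //; exact: borel_setT.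
Qed.

(* Measurability for the discrete sigma-algebra on [A]. *)
Definition dmeasurable {A : Type} (f : X -> A) :=
  forall P : A -> Prop, borel_set [set x | P (f x)].

Lemma dmeasurable_comp {A B : Type} (F : A -> B) (f : X -> A) :
  dmeasurable f -> dmeasurable (fun x => F (f x)).
Proof. by move=> hf P; exact: (hf (P \o F)). Qed.

Lemma dmeasurable_cst {A : Type} (a : A) : dmeasurable (fun _ : X => a).
Proof.
move=> P; case: (pselect (P a)) => h.
  by rewrite (_ : [set x | _] = setT); [exact: borel_setT | apply/seteqP; split].
by rewrite (_ : [set x | _] = set0); [exact: borel_set0 | apply/seteqP; split].
Qed.

Lemma dmeasurable_bind {A B : Type} (en : nat -> A) :
  (forall a, exists k, en k = a) ->
  forall (h : X -> A) (g : A -> X -> B),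
  dmeasurable h -> (forall a, dmeasurable (g a)) ->
  dmeasurable (fun x => g (h x) x).
Proof.
move=> hen h g hh hg P.
have -> : [set x | P (g (h x) x)] =
    \bigcup_k ([set x | h x = en k] `&` [set x | P (g (en k) x)]).
  apply/seteqP; split => x /=; last by case=> k _ [/= -> ].
  by move=> Hx; have [k hk] := hen (h x); exists k => //=; rewrite hk.
by apply: borel_bigcup => k; apply: borel_setI; [exact: (hh (eq^~ (en k))) | exact: hg].
Qed.

Lemma dmeasurable_pair {A B : Type} (en : nat -> B) :
  (forall b, exists k, en k = b) ->
  forall (f : X -> A) (g : X -> B),
  dmeasurable f -> dmeasurable g -> dmeasurable (fun x => (f x, g x)).
Proof.
move=> hen f g hf hg.
apply: (dmeasurable_bind hen (g := fun b x => (f x, b))) => // b.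
exact: (dmeasurable_comp (fun a => (a, b))).
Qed.

Lemma dmeasurable_nat (f : X -> nat) :
  (forall m, borel_set [set x | f x = m]) -> dmeasurable f.
Proof.
move=> hf P; have -> : [set x | P (f x)] = \bigcup_m ([set x | f x = m] `&` [set _ | P m]).
  apply/seteqP; split => x /=; first by move=> h; exists (f x).
  by case=> m _ [/= -> ].
by apply: borel_bigcup => m; apply: borel_setI => //; exact: (dmeasurable_cst m P).
Qed.

Lemma dmeasurable_asbool A : borel_set A -> dmeasurable (fun x => `[< A x >]).
Proof.
move=> hA P; have -> : [set x | P `[< A x >]] =
    (A `&` [set _ | P true]) `|` (~` A `&` [set _ | P false]).
  apply/seteqP; split => x /=; last by case=> -[h1 h2]; [rewrite asboolT | rewrite asboolF].
  by case: (pselect (A x)) => h;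
    [rewrite asboolT // => ?; left | rewrite asboolF // => ?; right].
apply: borel_setU; apply: borel_setI; [exact: hA | exact: (dmeasurable_cst true P) | |].
  exact: borel_setC.
exact: (dmeasurable_cst false P).
Qed.

Lemma dmeasurable_if {A : Type} (b : X -> bool) (f g : X -> A) :
  dmeasurable b -> dmeasurable f -> dmeasurable g ->
  dmeasurable (fun x => if b x then f x else g x).
Proof.
move=> hb hf hg P; have -> : [set x | P (if b x then f x else g x)] =
    ([set x | b x] `&` [set x | P (f x)]) `|` ([set x | ~~ b x] `&` [set x | P (g x)]).
  by apply/seteqP; split => x /=; case: (b x) => /=;
    [left | right | case=> [] [] | case=> [] []].
by apply: borel_setU; apply: borel_setI;
  [exact: (hb id) | exact: hf | exact: (hb negb) | exact: hg].
Qed.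

Lemma dmeasurable_addn (f g : X -> nat) :
  dmeasurable f -> dmeasurable g -> dmeasurable (fun x => (f x + g x)%N).
Proof.
move=> hf hg; have hen (b : nat) : exists k, id k = b by exists b.
exact: (dmeasurable_comp (fun p : nat * nat => (p.1 + p.2)%N) (dmeasurable_pair hen hf hg)).
Qed.

End BorelSets.

(* [0] when no [k] satisfies [P]. *)
Definition least (P : nat -> bool) : nat :=
  if pselect (exists k, P k) is left h then ex_minn h else 0%N.

Lemma leastP (P : nat -> bool) :
  (exists k, P k) -> P (least P) /\ forall k, P k -> (least P <= k)%N.
Proof. by move=> h; rewrite /least; case: pselect => // h'; case: ex_minnP. Qed.

Lemma least_le (P : nat -> bool) k : P k -> (least P <= k)%N.
Proof. by move=> Pk; apply: (leastP (ex_intro _ k Pk)).2. Qed.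

Lemma least_true (P : nat -> bool) k : P k -> P (least P).
Proof. by move=> Pk; apply: (leastP (ex_intro _ k Pk)).1. Qed.

Lemma least_eq (P : nat -> bool) m :
  P m -> (forall k, (k < m)%N -> ~~ P k) -> least P = m.
Proof.
move=> Pm Hm; have [h1 h2] := leastP (ex_intro _ m Pm).
apply/eqP; rewrite eqn_leq h2 //= leqNgt; apply/negP => lt.
by move: (Hm _ lt); rewrite h1.
Qed.

Lemma least_none (P : nat -> bool) : ~ (exists k, P k) -> least P = 0%N.
Proof. by move=> h; rewrite /least; case: pselect. Qed.

Lemma dmeasurable_least (X : topologicalType) (Q : nat -> X -> bool) :
  (forall k, borel_set [set x | Q k x]) -> dmeasurable (fun x => least (Q^~ x)).
Proof.
move=> hQ; apply: dmeasurable_nat => m.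
have -> : [set x | least (Q^~ x) = m] =
  ([set x | Q m x] `&` [set x | forall k, (k < m)%N -> ~ Q k x]) `|`
  ([set x | ~ exists k, Q k x] `&` [set _ | m = 0%N]).
  apply/seteqP; split => x /=.
    case: (pselect (exists k, Q k x)) => h.
      have [h1 h2] := leastP h => <-; left; split => // k lk qk.
      by move: (h2 _ qk); rewrite leqNgt lk.
    by move=> <-; right; split => //; rewrite least_none.
  case=> [[h1 h2]|[h1 /= ->]]; last by rewrite least_none.
  by apply: least_eq => // k /h2 /negP.
apply: borel_setU; apply: borel_setI => //.
- by apply: (borel_forall_lt (F := fun k => ~` [set x | Q k x])) => k _; exact: borel_setC.
- by apply: borel_setC; exact: (borel_exists (F := fun k => [set x | Q k x])).
- exact: (dmeasurable_cst m (fun a => a = 0%N)).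
Qed.

Definition int_of_nat (n : nat) : int := if odd n then Negz n./2 else Posz n./2.

Lemma int_of_nat_surj j : exists n, int_of_nat n = j.
Proof.
case: j => n; [exists n.*2 | exists n.*2.+1]; rewrite /int_of_nat ?odd_double ?doubleK //=.
by rewrite odd_double /= uphalf_double.
Qed.

Lemma int_of_nat_inj : injective int_of_nat.
Proof.
move=> a b; rewrite /int_of_nat.
case: (boolP (odd a)) => ha; case: (boolP (odd b)) => hb //= [] h.
  by rewrite -(odd_double_half a) -(odd_double_half b) ha hb h.
by rewrite -(odd_double_half a) -(odd_double_half b) (negbTE ha) (negbTE hb) h.
Qed.

Lemma int_nat (z : int) : (0 <= z)%R -> exists j : nat, z = Posz j.
Proof. by case: z => n // _; exists n. Qed.

Section IntegerIterates.
Variable X : topologicalType.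
Variables (T Tinv : X -> X).
Hypotheses (TK : cancel T Tinv) (TiK : cancel Tinv T).
Hypotheses (bT : borel_fun T) (bTi : borel_fun Tinv).

Definition iterz (j : int) (x : X) : X :=
  match j with Posz n => iter n T x | Negz n => iter n.+1 Tinv x end.

Lemma iterz_addr1 j x : iterz (j + 1)%R x = T (iterz j x).
Proof.
case: j => [n|[|n]]; first by have -> : (Posz n + 1 = Posz n.+1)%R by lia.
  by rewrite /= TiK.
have -> : (Negz n.+1 + 1 = Negz n)%R by rewrite !NegzE; lia.
by rewrite /= TiK.
Qed.

Lemma iterz_subr1 j x : iterz (j - 1)%R x = Tinv (iterz j x).
Proof. by have := iterz_addr1 (j - 1)%R x; rewrite GRing.subrK => ->; rewrite TK. Qed.

Lemma iterzD i j x : iterz i (iterz j x) = iterz (i + j)%R x.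
Proof.
case: i => n; elim: n => [|n IH].
- by rewrite add0r.
- rewrite (_ : (Posz n.+1 + j = (Posz n + j) + 1)%R); last by lia.
  by rewrite iterz_addr1 -IH (_ : Posz n.+1 = (Posz n + 1)%R) ?iterz_addr1 //; lia.
- by rewrite (_ : (Negz 0 + j = j - 1)%R) ?iterz_subr1 //; rewrite NegzE; lia.
- rewrite (_ : (Negz n.+1 + j = (Negz n + j) - 1)%R); last by rewrite !NegzE; lia.
  rewrite iterz_subr1 -IH (_ : Negz n.+1 = (Negz n - 1)%R) ?iterz_subr1 //.
  by rewrite !NegzE; lia.
Qed.

Lemma iterz_congr (P : set X) i j x : i = j -> P (iterz i x) -> P (iterz j x).
Proof. by move=> ->. Qed.

Lemma borel_fun_iter (f : X -> X) n : borel_fun f -> borel_fun (iter n f).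
Proof.
move=> hf; elim: n => [|n IH] A hA //=.
exact: (IH (f @^-1` A) (hf A hA)).
Qed.

Lemma borel_iterz j A : borel_set A -> borel_set (iterz j @^-1` A).
Proof. by case: j => n; apply: borel_fun_iter. Qed.

Lemma dmeasurable_iterz {B : Type} (f : X -> B) (h : X -> int) :
  dmeasurable f -> dmeasurable h -> dmeasurable (fun x => f (iterz (h x) x)).
Proof.
move=> hf hh.
apply: (dmeasurable_bind int_of_nat_surj (g := fun a x => f (iterz a x))) => //.
by move=> a P; exact: (borel_iterz a (hf P)).
Qed.

Definition orbit_avoid (D : set X) : set X := [set x | forall j : int, ~ D (iterz j x)].

Lemma orbit_avoid_iterz D x j : orbit_avoid D x -> orbit_avoid D (iterz j x).
Proof. by move=> hx i; rewrite iterzD; exact: hx. Qed.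

Lemma borel_orbit_avoid D : borel_set D -> borel_set (orbit_avoid D).
Proof.
move=> hD; have -> : orbit_avoid D = \bigcap_n ~` (iterz (int_of_nat n) @^-1` D).
  apply/seteqP; split => x /= h; first by move=> n _; exact: h.
  by move=> j; have [n <-] := int_of_nat_surj j; exact: h.
by apply: borel_bigcap => n; apply: borel_setC; exact: borel_iterz.
Qed.

End IntegerIterates.

Ltac iterz_lia :=
  match goal with |- ?P (iterz ?T ?Ti ?i ?x) -> ?P (iterz ?T ?Ti ?j ?x) =>
    apply: (@iterz_congr _ T Ti P i j x); lia end.

Lemma open_mdist_ball (R : realType) (X : metricType R) (c : X) (r : R) :
  open [set y | (mdist c y < r)%R].
Proof.
rewrite openE => y /= hy; rewrite /interior.
have e0 : (0 < r - mdist c y)%R by rewrite subr_gt0.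
apply: (filterS _ (nbhsx_ballx y _ e0)) => z; rewrite ballEmdist /= => hz.
have := metric_triangle c y z; lra.
Qed.

Definition ball_radius {R : realType} (m : nat) : R := (m.+1%:R)^-1%R.

Lemma ball_radius_gt0 (R : realType) m : (0 < @ball_radius R m)%R.
Proof. by rewrite /ball_radius invr_gt0. Qed.

Lemma ball_radius_small (R : realType) (d : R) :
  (0 < d)%R -> exists m, (3 * ball_radius m < d)%R.
Proof.
move=> d0; have h0 : (0 <= 3 / d)%R by rewrite divr_ge0 // ltW.
have := archi_boundP h0; set b := Num.Def.archi_bound _ => hb.
exists b; rewrite /ball_radius.
have hb1 : (3 / d < b.+1%:R)%R by apply: (lt_le_trans hb); rewrite ler_nat.
rewrite -[(3 * _)%R]/(3 / b.+1%:R)%R ltr_pdivrMr //.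
by move: hb1; rewrite ltr_pdivrMr // mulrC.
Qed.

Section Markers.
Variables (R : realType) (X : metricType R).
Variables (T Tinv : X -> X).
Hypotheses (TK : cancel T Tinv) (TiK : cancel Tinv T).
Hypotheses (bT : borel_fun T) (bTi : borel_fun Tinv).
Hypothesis T_aperiodic : forall x (n : nat), (0 < n)%N -> iter n T x <> x.
Variable s : nat -> X.
Hypothesis s_dense :
  forall (x : X) (e : R), (0 < e)%R -> exists i, (mdist x (s i) < e)%R.

Local Notation itz := (iterz T Tinv).
Local Notation itzD := (iterzD TK TiK).

Lemma borel_mdist_ball (c : X) (r : R) : borel_set [set y | (mdist c y < r)%R].
Proof. by apply: borel_open; exact: open_mdist_ball. Qed.

Definition ball_marker (n m i : nat) : set X :=
  [set y | (mdist (s i) y < ball_radius m)%R /\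
           forall j : nat, (1 <= j <= n)%N -> ~ (mdist (s i) (itz j y) < ball_radius m)%R].

Lemma borel_ball_marker n m i : borel_set (ball_marker n m i).
Proof.
have -> : ball_marker n m i = [set y | (mdist (s i) y < ball_radius m)%R] `&`
  [set y | forall j, (j < n.+1)%N -> (if (1 <= j)%N
     then itz j @^-1` ~` [set y | (mdist (s i) y < ball_radius m)%R] else setT) y].
  apply/seteqP; split => y /= [h1 h2]; split => // j.
    by move=> jn; case: ifP => // j1; apply: h2; rewrite j1.
  by case/andP => j1 jn; move: (h2 j jn); rewrite j1.
apply: borel_setI; first exact: borel_mdist_ball.
apply: borel_forall_lt => j _; case: ifP => _; last exact: borel_setT.
by apply: borel_iterz => //; apply: borel_setC; exact: borel_mdist_ball.
Qed.

Lemma ball_marker_sep n m i y j :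
  ball_marker n m i y -> (1 <= j <= n)%N -> ~ ball_marker n m i (itz j y).
Proof. by move=> [_ h] hj [h1 _]; exact: (h j hj). Qed.

(* A small enough ball around a point close to [x] separates [x] from its
   first [n] iterates, which are all distinct from [x] by aperiodicity. *)
Lemma ball_marker_cover n x : exists m i, ball_marker n m i x.
Proof.
have [m hm] : exists m, forall j : nat,
    (1 <= j <= n)%N -> (3 * ball_radius m < mdist x (itz j x))%R.
  elim: n => [|n [m hm]].
    by exists 0%N => j; rewrite leqn0 andbC; case: eqP => // ->.
  have dpos : (0 < mdist x (itz n.+1 x))%R.
    rewrite mdist_gt0; apply/eqP => h.
    by apply: (T_aperiodic (n := n.+1) (x := x)) => //; rewrite -[RHS]h.
  have [m' hm'] := ball_radius_small dpos.
  exists (maxn m m') => j /andP[j1]; rewrite leq_eqVlt => /orP[/eqP ->|jn].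
    apply: le_lt_trans hm'; rewrite ler_pM2l // /ball_radius lef_pV2 ?posrE //.
    by rewrite ler_nat ltnS leq_maxr.
  have := hm j; rewrite j1 -ltnS jn => /(_ isT); apply: le_lt_trans.
  rewrite ler_pM2l // /ball_radius lef_pV2 ?posrE //.
  by rewrite ler_nat ltnS leq_maxl.
have [i hi] := s_dense x (ball_radius_gt0 R m).
exists m, i; split; first by rewrite metric_sym.
move=> j hj hc; have := hm j hj.
have := metric_triangle x (s i) (itz j x).
have := ball_radius_gt0 R m; lra.
Qed.

Definition marker_candidate (n k : nat) : set X :=
  if unpickle k is Some (m, i) then ball_marker n m i else set0.

Lemma borel_marker_candidate n k : borel_set (marker_candidate n k).
Proof.
rewrite /marker_candidate; case: unpickle => [[m i]|]; last exact: borel_set0.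
exact: borel_ball_marker.
Qed.

Lemma marker_candidate_cover n x : exists k, marker_candidate n k x.
Proof.
have [m [i h]] := ball_marker_cover n x.
by exists (pickle (m, i)); rewrite /marker_candidate pickleK.
Qed.

Lemma marker_candidate_sep n k y j :
  marker_candidate n k y -> (1 <= j <= n)%N -> ~ marker_candidate n k (itz j y).
Proof.
by rewrite /marker_candidate; case: unpickle => [[m i]|] //; exact: ball_marker_sep.
Qed.

Definition orbit_nbhd (n : nat) (S : set X) : set X :=
  [set y | exists j : nat, (j <= n)%N /\ (S (itz j y) \/ S (itz (- j%:Z)%R y))].

Lemma borel_orbit_nbhd n S : borel_set S -> borel_set (orbit_nbhd n S).
Proof.
move=> hS; pose F j := if (j <= n)%N
  then itz j @^-1` S `|` itz (- j%:Z)%R @^-1` S else set0.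
have -> : orbit_nbhd n S = [set y | exists j, F j y].
  apply/seteqP; split => y /= [j h]; exists j; first by rewrite /F; case: h => -> h.
  by move: h; rewrite /F; case: ifP.
apply: borel_exists => j; rewrite /F; case: ifP => _; last exact: borel_set0.
by apply: borel_setU; exact: borel_iterz.
Qed.

Fixpoint marker_upto (n k : nat) : set X :=
  if k is k'.+1 then marker_upto n k' `|`
    (marker_candidate n k' `\` orbit_nbhd n (marker_upto n k'))
  else set0.

Definition marker (n : nat) : set X := \bigcup_k marker_upto n k.

Lemma borel_marker n : borel_set (marker n).
Proof.
apply: borel_bigcup => k; elim: k => [|k IH] /=; first exact: borel_set0.
apply: borel_setU => //; apply: borel_setD; first exact: borel_marker_candidate.
exact: borel_orbit_nbhd.
Qed.

Lemma marker_upto_mono n k k' : (k <= k')%N -> marker_upto n k `<=` marker_upto n k'.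
Proof. by move=> /subnK <-; elim: (k' - k)%N => [|d IH] //= y h; left; exact: IH. Qed.

Lemma marker_upto_sep n k y j :
  marker_upto n k y -> (1 <= j <= n)%N -> ~ marker_upto n k (itz j y).
Proof.
have jn : (1 <= j <= n)%N -> (j <= n)%N by case/andP.
elim: k y => [|k IH] y //=.
case=> [hy|[hy ny]] hj [hz|[hz nz]].
- exact: IH hy hj hz.
- apply: nz; exists j; split; first exact: jn.
  by right; rewrite -[iter j T y]/(itz j y) itzD addNr.
- by apply: ny; exists j; split; [exact: jn | left].
- exact: marker_candidate_sep hy hj hz.
Qed.

Lemma marker_sep n y j : marker n y -> (1 <= j <= n)%N -> ~ marker n (itz j y).
Proof.
move=> [k _ hk] hj [k' _ hk'].
apply: (marker_upto_sep (k := maxn k k') _ hj).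
  by apply: marker_upto_mono hk; rewrite leq_maxl.
by apply: marker_upto_mono hk'; rewrite leq_maxr.
Qed.

Lemma marker_cover n y :
  exists j : int, (- n%:Z <= j <= n%:Z)%R /\ marker n (itz j y).
Proof.
have [k hk] := marker_candidate_cover n y.
case: (pselect (orbit_nbhd n (marker_upto n k) y)) => [[j [jn [h|h]]]|h].
- by exists j; split; [lia | exists k].
- by exists (- j%:Z)%R; split; [lia | exists k].
- by exists 0%R; split; [lia | exists k.+1 => //=; right].
Qed.

End Markers.

(* Consecutive points of [marker n] are at most [2 n] apart; moving on to the
   next point of level [k] costs at most [gap_bound k] more. *)
Fixpoint gap_bound (k : nat) : nat :=
  if k is k'.+1 then (gap_bound k' + 2 * (gap_bound k' + k'.+1))%N else 0%N.

Definition marker_scale (k : nat) : nat := (gap_bound k + k + 1)%N.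

Section NestedMarkers.
Variables (R : realType) (X : metricType R).
Variables (T Tinv : X -> X).
Hypotheses (TK : cancel T Tinv) (TiK : cancel Tinv T).
Hypotheses (bT : borel_fun T) (bTi : borel_fun Tinv).
Hypothesis T_aperiodic : forall x (n : nat), (0 < n)%N -> iter n T x <> x.
Variable s : nat -> X.
Hypothesis s_dense :
  forall (x : X) (e : R), (0 < e)%R -> exists i, (mdist x (s i) < e)%R.

Local Notation itz := (iterz T Tinv).
Local Notation itzD := (iterzD TK TiK).
Local Notation marker := (marker T Tinv s).

(* Level [k.+1] keeps the first point of level [k] at or after each point of
   [marker (marker_scale k)]. *)
Fixpoint nested_marker (k : nat) : set X :=
  if k is k'.+1 then
    [set x | nested_marker k' x /\ exists j : nat,
       marker (marker_scale k') (itz (- j%:Z)%R x) /\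
       forall i : nat, (1 <= i <= j)%N -> ~ nested_marker k' (itz (- i%:Z)%R x)]
  else setT.

Lemma borel_nested_marker k : borel_set (nested_marker k).
Proof.
elim: k => [|k IH] /=; first exact: borel_setT.
pose F j := itz (- j%:Z)%R @^-1` marker (marker_scale k) `&`
  [set x | forall i, (i < j.+1)%N ->
     (if (1 <= i)%N then itz (- i%:Z)%R @^-1` ~` nested_marker k else setT) x].
have -> : [set x | nested_marker k x /\ exists j : nat,
    marker (marker_scale k) (itz (- j%:Z)%R x) /\
    forall i : nat, (1 <= i <= j)%N -> ~ nested_marker k (itz (- i%:Z)%R x)] =
    nested_marker k `&` [set x | exists j, F j x].
  apply/seteqP; split => x /= [h1 [j [h2 h3]]]; split => //; exists j; split => //.
    by move=> i; case: ifP => // i1 ij; apply: h3; rewrite i1.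
  by move=> i /andP[i1 ij]; move: (h3 i ij); rewrite i1.
apply: borel_setI => //; apply: borel_exists => j; apply: borel_setI.
  by apply: borel_iterz => //; exact: borel_marker.
apply: borel_forall_lt => i _; case: ifP => _; last exact: borel_setT.
by apply: borel_iterz => //; exact: borel_setC.
Qed.

Lemma nested_marker_mono k k' : (k <= k')%N -> nested_marker k' `<=` nested_marker k.
Proof. by move=> /subnK <-; elim: (k' - k)%N => [|d IH] //= x [/IH]. Qed.

Lemma nested_marker_gap_back k x :
  exists j : nat, (j <= gap_bound k)%N /\ nested_marker k (itz (- j%:Z)%R x).
Proof.
elim: k x => [|k IH] x; first by exists 0%N.
pose n := marker_scale k.
have [t [tb ha]] := marker_cover Tinv T_aperiodic s_dense n
  (itz (- (gap_bound k + n)%:Z)%R x).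
set a := itz t _ in ha.
have [e0 [e0b he0]] : exists e0 : nat, (e0 <= gap_bound k)%N /\ nested_marker k (itz e0 a).
  have [j [jb hj]] := IH (itz (gap_bound k) a).
  exists (gap_bound k - j)%N; split; first by rewrite leq_subr.
  by move: hj; rewrite itzD; iterz_lia.
pose P (e : nat) := `[< nested_marker k (itz e a) >].
have Pe0 : P e0 by exact/asboolP.
set e := least P.
have Pe : nested_marker k (itz e a) by apply/asboolP; exact: least_true Pe0.
have hp : nested_marker k.+1 (itz e a).
  split => //; exists e; split; first by rewrite itzD addNr.
  move=> i /andP[i1 ie] hi.
  have : (e <= e - i)%N.
    by apply: least_le; apply/asboolP; move: hi; rewrite itzD; iterz_lia.
  lia.
have ee0 : (e <= e0)%N by exact: least_le.
have [j hj] : exists j : nat, (Posz (gap_bound k) + Posz n - t - Posz e)%R = Posz j.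
  by apply: int_nat; lia.
exists j; split.
  by clearbody e P a; rewrite /= /n /marker_scale in hj tb *; lia.
by move: hp; rewrite /a !itzD; iterz_lia.
Qed.

Lemma nested_marker_gap_fwd k a :
  exists e : nat, (e <= gap_bound k)%N /\ nested_marker k (itz e a).
Proof.
have [j [jb hj]] := nested_marker_gap_back k (itz (gap_bound k) a).
exists (gap_bound k - j)%N; split; first by rewrite leq_subr.
by move: hj; rewrite itzD; iterz_lia.
Qed.

Lemma nested_marker_gap_le k x e :
  (forall i : nat, (1 <= i <= e)%N -> ~ nested_marker k (itz (- i%:Z)%R x)) ->
  (e <= gap_bound k)%N.
Proof.
move=> h; have [e0 [e0b he0]] := nested_marker_gap_fwd k (itz (- e%:Z)%R x).
rewrite leqNgt; apply/negP => eG.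
apply: (h (e - e0)%N); first lia.
by move: he0; rewrite itzD; iterz_lia.
Qed.

Lemma nested_marker_sep k x (j : nat) :
  nested_marker k.+1 x -> nested_marker k.+1 (itz j x) -> (1 <= j <= k.+1)%N -> False.
Proof.
move=> [hx [e [ha he]]] [hy [f [hb hf]]] hj.
have eG := nested_marker_gap_le he.
case: (leqP j f) => jf.
  by apply: (hf j); [lia | rewrite itzD addNr].
apply: (marker_sep TK TiK (n := marker_scale k) (j := (j - f + e)%N) ha).
  by rewrite /marker_scale; lia.
by move: hb; rewrite !itzD; iterz_lia.
Qed.

Definition marker_limit : set X := \bigcap_k nested_marker k.

Lemma borel_marker_limit : borel_set marker_limit.
Proof. by apply: borel_bigcap => k; exact: borel_nested_marker. Qed.

Lemma marker_limit_wandering x (j : int) :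
  marker_limit x -> marker_limit (itz j x) -> j = 0%R.
Proof.
move=> hx hy; wlog jpos : x j hx hy / (0 <= j)%R.
  move=> W; case: (lerP 0 j) => hj; first exact: W hx hy hj.
  have hx' : marker_limit (itz (- j)%R (itz j x)) by rewrite itzD addNr.
  have := W (itz j x) (- j)%R hy hx'; lia.
have [[|m] hm] := int_nat jpos; subst j => //.
by exfalso; apply: (nested_marker_sep (k := m) (hx m.+1 I) (hy m.+1 I)); lia.
Qed.

End NestedMarkers.

Definition UA_left {n : nat} (e : UAE n) : bool :=
  if e is inl (_, b) then ~~ b else false.

Definition UA_right {n : nat} (e : UAE n) : bool :=
  if e is inl (_, b) then b else false.

Lemma UA_edge_lt_left_right n (e f : UAE n) : UA_edge_lt e f -> UA_left e /\ UA_right f.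
Proof. by case: e => [[w [|]]|u]; case: f => [[w' [|]]|u']. Qed.

Lemma UA_left_right n (e : UAE n) : UA_left e -> UA_right e -> False.
Proof. by case: e => [[w [|]]|u]. Qed.

Lemma adic_shift_graph_intro (p q : UApath) m w :
  UAedge p m = inl (w, false) -> UAedge q m = inl (w, true) ->
  (forall k, (m < k)%N -> UAedge p k = UAedge q k) ->
  (forall k, (k < m)%N -> ~~ UA_left (UAedge p k)) ->
  (forall k, (k < m)%N -> ~~ UA_right (UAedge q k)) ->
  adic_shift_graph p q.
Proof.
move=> hp hq hpq hpl hqr; split; first by exists m; split => //; rewrite hp hq.
case=> r [[m1 [h1 l1]] [m2 [h2 l2]]].
have [f1 t1] := UA_edge_lt_left_right l1; have [f2 t2] := UA_edge_lt_left_right l2.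
case: (ltnP m1 m) => hm1; first by move: (hpl _ hm1); rewrite f1.
case: (ltnP m2 m) => hm2; first by move: (hqr _ hm2); rewrite t2.
case: (ltngtP m1 m2) => hm12.
- have e1 := h1 _ hm12.
  have e2 : UAedge p m2 = UAedge q m2 by apply: hpq; lia.
  by apply: (UA_left_right f2); rewrite -e1 e2.
- have e1 := h2 _ hm12.
  have e2 : UAedge p m1 = UAedge q m1 by apply: hpq; lia.
  by apply: (UA_left_right f1); rewrite e2 -e1.
- by subst m2; exact: (UA_left_right f2 t1).
Qed.

(* The number of paths from the root to a vertex. *)
Fixpoint UA_height (n : nat) : UAV n -> nat :=
  match n return UAV n -> nat with
  | 0 => fun _ => 1%N
  | n'.+1 => fun v => match v with
               | inl (u, w) => (UA_height u + UA_height w)%N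
               | inr u => UA_height u end
  end.

Definition UA_edge_rank {n : nat} (e : UAE n) : nat :=
  if e is inl ((u, _), true) then UA_height u else 0%N.

(* The position of [p] among the paths to its vertex of level [n]. *)
Definition UA_rank (p : UApath) (n : nat) : nat := \sum_(k < n) UA_edge_rank (UAedge p k).

Fixpoint UAV_of_nat (n : nat) : nat -> UAV n :=
  match n return nat -> UAV n with
  | 0 => fun _ => tt
  | n'.+1 => fun k => if odd k then inr (UAV_of_nat n' k./2)
             else if @unpickle (nat * nat)%type k./2 is Some (i, j)
               then inl (UAV_of_nat n' i, UAV_of_nat n' j)
               else inr (UAV_of_nat n' 0)
  end.

Lemma UAV_of_nat_surj n (v : UAV n) : exists k, UAV_of_nat n k = v.
Proof.
elim: n v => [|n IH] v; first by case: v; exists 0%N.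
case: v => [[u w]|u] /=.
  have [i hi] := IH u; have [j hj] := IH w.
  by exists (pickle (i, j)).*2; rewrite odd_double doubleK pickleK hi hj.
have [i hi] := IH u; exists i.*2.+1.
by rewrite /= odd_double /= uphalf_double hi.
Qed.

Lemma borel_preimage_UApath (X : topologicalType) (Phi : X -> UApath) (Y : set X) :
  (forall n, dmeasurable (fun x => UAedge (Phi x) n)) -> borel_set Y ->
  forall B, UA_borel_set B -> borel_set (Y `&` Phi @^-1` B).
Proof.
move=> hPhi hY B hB.
suff : UA_borel_set `<=` [set B | borel_set (Y `&` Phi @^-1` B)] by apply.
apply: smallest_sub; first split.
- by rewrite /= preimage_set0 setI0; exact: borel_set0.
- move=> A hA; rewrite /= setTD preimage_setC.
  have -> : Y `&` ~` (Phi @^-1` A) = Y `\` (Y `&` Phi @^-1` A).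
    by rewrite setDIr setDv set0U.
  exact: borel_setD.
- by move=> F hF; rewrite /= preimage_bigcup setI_bigcupr; exact: borel_bigcup.
by move=> A [n [e ->]]; apply: borel_setI => //; exact: (hPhi n (eq^~ e)).
Qed.

Section AdicCoding.
Variable X : topologicalType.
Variables (T Tinv : X -> X).
Hypotheses (TK : cancel T Tinv) (TiK : cancel Tinv T).
Local Notation itz := (iterz T Tinv).
Local Notation itzD := (iterzD TK TiK).

Variable lab : X -> nat.
Variable Y : set X.
Hypothesis Y_itz : forall x j, Y x -> Y (itz j x).
Hypothesis lab_back :
  forall x n, Y x -> exists a : nat, (n <= lab (itz (- Posz a)%R x))%N.
Hypothesis lab_fwd :
  forall x n, Y x -> exists b : nat, (n <= lab (itz (Posz b.+1) x))%N.
Hypothesis lab_between : forall z n (j : nat), Y z -> lab z = n ->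
  lab (itz (Posz j) z) = n -> (1 <= j)%N ->
  exists i : nat, (0 < i < j)%N /\ (n <= lab (itz (Posz i) z))%N.

(* The points of label [>= n] cut each orbit of [Y] into the blocks of level
   [n]: [block_start n x] is the last of them at or before [x], and
   [block_next n x] the first one after [x]. *)
Definition back n x := least (fun a => n <= lab (itz (- Posz a)%R x))%N.
Definition fwd n x := (least (fun b => n <= lab (itz (Posz b.+1) x))%N).+1.
Definition block_start n x := itz (- Posz (back n x))%R x.
Definition block_next n x := itz (Posz (fwd n x)) x.

Lemma back_spec n x : Y x -> (n <= lab (block_start n x))%N /\
  forall i : nat, (i < back n x)%N -> (lab (itz (- Posz i)%R x) < n)%N.
Proof.
move=> hx; have [a0 h0] := lab_back n hx.
have [h1 h2] := @leastP (fun a : nat => (n <= lab (itz (- Posz a)%R x))%N)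
  (ex_intro _ a0 h0).
split => // i hi; rewrite ltnNge; apply/negP => h.
by move: (h2 _ h); rewrite leqNgt hi.
Qed.

Lemma fwd_spec n x : Y x -> (n <= lab (block_next n x))%N /\
  forall i : nat, (1 <= i < fwd n x)%N -> (lab (itz (Posz i) x) < n)%N.
Proof.
move=> hx; have [b0 h0] := lab_fwd n hx.
have [h1 h2] := @leastP (fun b : nat => (n <= lab (itz (Posz b.+1) x))%N)
  (ex_intro _ b0 h0).
split => // -[|i] hi //; rewrite ltnNge; apply/negP => h.
by move: (h2 _ h); rewrite leqNgt; case/andP: hi => _; rewrite /fwd ltnS => ->.
Qed.

Lemma back_eq n x a0 : (n <= lab (itz (- Posz a0)%R x))%N ->
  (forall i : nat, (i < a0)%N -> (lab (itz (- Posz i)%R x) < n)%N) -> back n x = a0.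
Proof. by move=> h1 h2; apply: least_eq => // k /h2; rewrite ltnNge. Qed.

Lemma fwd_eq n x b0 : (1 <= b0)%N -> (n <= lab (itz (Posz b0) x))%N ->
  (forall i : nat, (1 <= i < b0)%N -> (lab (itz (Posz i) x) < n)%N) -> fwd n x = b0.
Proof.
case: b0 => // b0 _ h1 h2; rewrite /fwd; congr S.
apply: least_eq => // k kb; rewrite -ltnNge; apply: h2; lia.
Qed.

Lemma back_self n y : (n <= lab y)%N -> back n y = 0%N.
Proof. by move=> h; apply: back_eq. Qed.

Lemma block_start_self n y : (n <= lab y)%N -> block_start n y = y.
Proof. by move=> h; rewrite /block_start back_self. Qed.

Lemma fwd_succ n x : (n <= lab (itz 1 x))%N -> fwd n x = 1%N.
Proof. by move=> h; apply: fwd_eq => // i; lia. Qed.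

Lemma block_next_succ n x : (n <= lab (itz 1 x))%N -> block_next n x = itz 1 x.
Proof. by move=> h; rewrite /block_next fwd_succ. Qed.

Lemma back_step n x : Y x -> (lab (itz 1 x) < n)%N -> back n (itz 1 x) = (back n x).+1.
Proof.
move=> hx h1; have [s1 s2] := back_spec n hx.
apply: back_eq.
  rewrite itzD; move: s1; rewrite /block_start.
  by congr (n <= lab _)%N; congr (itz _ _); lia.
move=> [|i] hi; first by [].
rewrite itzD; have := s2 i hi; congr (lab _ < n)%N; congr (itz _ _); lia.
Qed.

Lemma block_start_step n x : Y x -> (lab (itz 1 x) < n)%N ->
  block_start n (itz 1 x) = block_start n x.
Proof. by move=> hx h1; rewrite /block_start back_step // itzD; congr (itz _ _); lia. Qed.

Lemma fwd_step n x : Y x -> (lab (itz 1 x) < n)%N -> fwd n x = (fwd n (itz 1 x)).+1.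
Proof.
move=> hx h1; have hx1 := Y_itz 1 hx.
have [s1 s2] := fwd_spec n hx1.
apply: fwd_eq => //.
  move: s1; rewrite /block_next itzD.
  by congr (n <= lab _)%N; congr (itz _ _); lia.
move=> [|[|i]] hi //.
have := s2 i.+1 ltac:(lia); rewrite itzD; congr (lab _ < n)%N; congr (itz _ _); lia.
Qed.

Lemma block_next_step n x : Y x -> (lab (itz 1 x) < n)%N ->
  block_next n (itz 1 x) = block_next n x.
Proof.
by move=> hx h1; rewrite /block_next (fwd_step hx h1) itzD; congr (itz _ _); lia.
Qed.

Lemma block_next_start n x :
  block_next n x = itz (Posz (back n x + fwd n x)) (block_start n x).
Proof. by rewrite /block_next /block_start itzD; congr (itz _ _); lia. Qed.

Lemma block_ends_label n x :
  Y x -> lab (block_start n x) = n -> lab (block_next n x) = n -> False.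
Proof.
move=> hx hR hL.
have [_ a2] := back_spec n hx; have [_ b2] := fwd_spec n hx.
have hL' : lab (itz (Posz (back n x + fwd n x)) (block_start n x)) = n.
  by rewrite -block_next_start.
have [i [hi]] := lab_between (Y_itz _ hx) hR hL' ltac:(rewrite /fwd; lia).
rewrite /block_start itzD; case: (leqP i (back n x)) => hia.
  rewrite (_ : (_ + _)%R = - Posz (back n x - i))%R; last by lia.
  by have := a2 (back n x - i)%N ltac:(lia); rewrite ltnNge => /negP.
rewrite (_ : (_ + _)%R = Posz (i - back n x))%R; last by lia.
by have := b2 (i - back n x)%N ltac:(lia); rewrite ltnNge => /negP.
Qed.

(* The level-[n.+1] block of [x] is its level-[n] block, merged with the
   preceding one when it starts at a point of label exactly [n], with the
   following one when the next block does, and alone otherwise. *)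
Definition code_edge_of n (Vn : X -> UAV n) (x : X) : UAE n :=
  if lab (block_start n x) == n
  then inl ((Vn (itz (-1)%R (block_start n x)), Vn x), true)
  else if lab (block_next n x) == n then inl ((Vn x, Vn (block_next n x)), false)
  else inr (Vn x).

Fixpoint code_vertex (n : nat) : X -> UAV n :=
  if n is n'.+1 then fun x => UA_tgt (code_edge_of (code_vertex n') x) else fun _ => tt.

Definition code_edge n x := code_edge_of (code_vertex n) x.

Lemma UA_src_code_edge n (Vn : X -> UAV n) x : UA_src (code_edge_of Vn x) = Vn x.
Proof. by rewrite /code_edge_of; case: ifP => _ //; case: ifP. Qed.

Definition coding (x : X) : UApath :=
  @exist (forall n : nat, UAE n) (fun p => forall n, UA_src (p n.+1) = UA_tgt (p n))
    (fun n => code_edge n x) (fun n => UA_src_code_edge (code_vertex n.+1) x).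

Lemma codingE x n : UAedge (coding x) n = code_edge n x. Proof. by []. Qed.

Lemma code_edge_step n x : Y x -> (lab (itz 1 x) < n)%N ->
  code_vertex n (itz 1 x) = code_vertex n x -> code_edge n (itz 1 x) = code_edge n x.
Proof.
move=> hx h1 hV.
by rewrite /code_edge /code_edge_of (block_start_step hx h1) (block_next_step hx h1) hV.
Qed.

Lemma code_vertex_step n x : Y x -> (lab (itz 1 x) < n)%N ->
  code_vertex n (itz 1 x) = code_vertex n x.
Proof.
elim: n x => [|n IH] x hx h1 //=.
rewrite ltnS leq_eqVlt in h1; case/orP: h1 => [/eqP h1|h1].
- have hn1 : (n <= lab (itz 1 x))%N by rewrite h1.
  have hnx := block_next_succ hn1.
  have hst := block_start_self hn1.
  rewrite /code_edge_of hst h1 eqxx itzD addNr /=.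
  case: ifP => [/eqP hR|_].
    by exfalso; apply: (block_ends_label hx hR); rewrite hnx.
  by rewrite hnx h1 eqxx.
- rewrite -/(code_edge n (itz 1 x)) -/(code_edge n x).
  by rewrite (code_edge_step hx h1 (IH x hx h1)).
Qed.

Lemma coding_shift x : Y x -> adic_shift_graph (coding x) (coding (itz 1 x)).
Proof.
move=> hx; set m := lab (itz 1 x).
have hm : (m <= lab (itz 1 x))%N by [].
apply: (@adic_shift_graph_intro _ _ m (code_vertex m x, code_vertex m (itz 1 x))).
- rewrite codingE /code_edge /code_edge_of.
  case: ifP => [/eqP hR|_].
    by exfalso; apply: (block_ends_label hx hR); rewrite block_next_succ.
  by rewrite block_next_succ // eqxx.
- by rewrite codingE /code_edge /code_edge_of block_start_self // eqxx itzD addNr.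
- move=> k mk; rewrite !codingE; apply/esym/code_edge_step => //.
  by apply: code_vertex_step.
- move=> k km; rewrite codingE /code_edge /code_edge_of; case: ifP => // _.
  rewrite block_next_succ; last by lia.
  by rewrite -/m (_ : (m == k) = false) //; apply/eqP; lia.
- move=> k km; rewrite codingE /code_edge /code_edge_of block_start_self; last by lia.
  rewrite -/m (_ : (m == k) = false) //; last by apply/eqP; lia.
  by case: ifP.
Qed.

Lemma coding_shift_defined x : Y x -> adic_shift_defined (coding x).
Proof. by move=> hx; exists (coding (itz 1 x)); apply: coding_shift. Qed.

Lemma back_level_same n x : Y x -> lab (block_start n x) <> n -> back n.+1 x = back n x.
Proof.
move=> hx hne; have [a1 a2] := back_spec n hx.
apply: back_eq; first by rewrite /block_start in a1 hne; lia.
by move=> i /a2; lia.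
Qed.

Lemma fwd_level_same n x : Y x -> lab (block_next n x) <> n -> fwd n.+1 x = fwd n x.
Proof.
move=> hx hne; have [b1 b2] := fwd_spec n hx.
apply: fwd_eq => //; first by rewrite /block_next in b1 hne; lia.
by move=> i /b2; lia.
Qed.

Lemma back_level_merge n x : Y x -> lab (block_start n x) = n ->
  back n.+1 x = (back n x + (back n.+1 (itz (-1)%R (block_start n x))).+1)%N.
Proof.
move=> hx he; set y := itz (-1)%R (block_start n x).
have hy : Y y by apply: Y_itz; apply: Y_itz.
have [a1 a2] := back_spec n hx; have [c1 c2] := back_spec n.+1 hy.
apply: back_eq.
  move: c1; rewrite /block_start /y !itzD.
  by congr (_ <= lab _)%N; congr (itz _ _); lia.
move=> i hi.
case: (ltngtP i (back n x)) => h.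
- by have := a2 _ h; lia.
- have := c2 (i - (back n x).+1)%N ltac:(lia).
  rewrite /y /block_start !itzD.
  rewrite [itz _ x](_ : _ = itz (- Posz i)%R x); last by congr (itz _ _); lia.
  lia.
- by subst i; rewrite -/(block_start n x) he.
Qed.

Lemma fwd_level_merge n x : Y x -> lab (block_next n x) = n ->
  fwd n.+1 x = (fwd n x + fwd n.+1 (block_next n x))%N.
Proof.
move=> hx he; set z := block_next n x.
have hz : Y z by apply: Y_itz.
have [b1 b2] := fwd_spec n hx; have [c1 c2] := fwd_spec n.+1 hz.
apply: fwd_eq; first by rewrite addn_gt0 /fwd.
  move: c1; rewrite /block_next /z /block_next !itzD.
  by congr (_ <= lab _)%N; congr (itz _ _); lia.
move=> i hi.
case: (ltngtP i (fwd n x)) => h.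
- by have := b2 i ltac:(lia); lia.
- have := c2 (i - fwd n x)%N ltac:(lia).
  rewrite /z /block_next !itzD.
  rewrite [itz _ x](_ : _ = itz (Posz i) x); last by congr (itz _ _); lia.
  lia.
- by subst i; rewrite -/(block_next n x) he.
Qed.

(* The paths to [code_vertex n x] list the level-[n] block of [x] in orbit
   order, the path [coding x] coming at the position of [x]. *)
Lemma coding_rank n x : Y x -> UA_rank (coding x) n = back n x /\
  UA_height (code_vertex n x) = (back n x + fwd n x)%N.
Proof.
elim: n x => [|n IH] x hx; first by rewrite /UA_rank big_ord0 back_self // fwd_succ.
have [r1 h1] := IH x hx.
rewrite /UA_rank big_ord_recr /= -/(UA_rank (coding x) n) r1 -/(code_edge n x).
rewrite /code_edge /code_edge_of.
case: ifP => [/eqP hR|hR].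
  set y := itz (-1)%R (block_start n x).
  have hy : Y y by apply: Y_itz; apply: Y_itz.
  have hnxy : block_next n y = block_start n x.
    by rewrite block_next_succ /y itzD addrN //; have [] := back_spec n hx.
  have hRy : lab (block_start n y) <> n.
    by move=> h; apply: (block_ends_label hy h); rewrite hnxy.
  have hL : lab (block_next n x) <> n by exact: block_ends_label hx hR.
  have [r2 h2] := IH y hy.
  rewrite (back_level_merge hx hR) (back_level_same hy hRy) (fwd_level_same hx hL) /= h2 h1.
  have -> : fwd n y = 1%N.
    by apply: fwd_succ; rewrite /y itzD addrN; have [] := back_spec n hx.
  split; lia.
case: ifP => [/eqP hL|hL].
  set z := block_next n x.
  have hz : Y z by apply: Y_itz.
  have hstz : block_start n z = z by apply: block_start_self; rewrite /z hL.
  have hLz : lab (block_next n z) <> n.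
    by move=> h; apply: (block_ends_label hz _ h); rewrite hstz.
  have [r2 h2] := IH z hz.
  have hR' : lab (block_start n x) <> n by move=> h; move/eqP: h; rewrite hR.
  rewrite (back_level_same hx hR') (fwd_level_merge hx hL) (fwd_level_same hz hLz).
  rewrite /= h2 h1 -/z.
  rewrite (back_self (n:=n) (y:=z)); last by rewrite /z hL.
  split; lia.
have hR' : lab (block_start n x) <> n by move=> h; move/eqP: h; rewrite hR.
have hL' : lab (block_next n x) <> n by move=> h; move/eqP: h; rewrite hL.
by rewrite (back_level_same hx hR') (fwd_level_same hx hL') /= h1 addn0.
Qed.

Lemma block_start_label n0 x : Y x -> (n0 <= lab (block_start n0 x))%N /\
  block_start (lab (block_start n0 x)) x = block_start n0 x.
Proof.
move=> hx; have [a1 a2] := back_spec n0 hx; split => //.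
have e : back (lab (block_start n0 x)) x = back n0 x.
  by apply: back_eq => // i /a2; lia.
by rewrite /block_start e.
Qed.

Lemma back_le n x (j : nat) : (n <= lab (itz (- Posz j)%R x))%N -> (back n x <= j)%N.
Proof. by move=> h; apply: least_le. Qed.

Lemma coding_eq_block_start n x y : Y x -> Y y -> coding x = coding y ->
  lab (block_start n x) = n -> lab (block_start n y) = n /\ back n y = back n x.
Proof.
move=> hx hy hxy hRx; split.
  have : UA_right (UAedge (coding x) n).
    by rewrite codingE /code_edge /code_edge_of hRx eqxx.
  rewrite hxy codingE /code_edge /code_edge_of.
  by case: ifP => [/eqP //|_]; case: ifP.
have [rx _] := coding_rank n hx; have [ry _] := coding_rank n hy.
by rewrite -rx -ry hxy.
Qed.

End AdicCoding.

Section CodingMeasurable.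
Variable X : topologicalType.
Variables (T Tinv : X -> X).
Hypotheses (bT : borel_fun T) (bTi : borel_fun Tinv).
Local Notation itz := (iterz T Tinv).
Variable lab : X -> nat.
Hypothesis lab_measurable : dmeasurable lab.

Local Notation back := (back T Tinv lab).
Local Notation fwd := (fwd T Tinv lab).
Local Notation block_start := (block_start T Tinv lab).
Local Notation block_next := (block_next T Tinv lab).

Lemma dmeasurable_back n : dmeasurable (back n).
Proof.
apply: (dmeasurable_least (Q := fun a x => n <= lab (itz (- Posz a)%R x))%N) => a.
exact: (dmeasurable_iterz bT bTi lab_measurable (dmeasurable_cst _) (fun m => n <= m)%N).
Qed.

Lemma dmeasurable_fwd n : dmeasurable (fwd n).
Proof.
apply: (dmeasurable_comp S (f := fun x => least (fun b => n <= lab (itz (Posz b.+1) x))%N)).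
apply: (dmeasurable_least (Q := fun b x => n <= lab (itz (Posz b.+1) x))%N) => b.
exact: (dmeasurable_iterz bT bTi lab_measurable (dmeasurable_cst _) (fun m => n <= m)%N).
Qed.

Lemma dmeasurable_block_start {B : Type} n (f : X -> B) :
  dmeasurable f -> dmeasurable (fun x => f (block_start n x)).
Proof.
move=> hf; apply: (dmeasurable_iterz bT bTi (h := fun x => (- Posz (back n x))%R)) => //.
exact: (dmeasurable_comp (fun a : nat => (- Posz a)%R) (dmeasurable_back n)).
Qed.

Lemma dmeasurable_block_next {B : Type} n (f : X -> B) :
  dmeasurable f -> dmeasurable (fun x => f (block_next n x)).
Proof.
move=> hf; apply: (dmeasurable_iterz bT bTi (h := fun x => Posz (fwd n x))) => //.
exact: (dmeasurable_comp (fun a : nat => Posz a) (dmeasurable_fwd n)).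
Qed.

Lemma dmeasurable_code_edge_of n (Vn : X -> UAV n) :
  dmeasurable Vn -> dmeasurable (code_edge_of T Tinv lab Vn).
Proof.
move=> hV; have pairV := dmeasurable_pair (@UAV_of_nat_surj n).
have hlab : dmeasurable (fun y => lab y == n) by exact: (dmeasurable_comp (eq_op^~ n)).
apply: dmeasurable_if; [exact: (dmeasurable_block_start n hlab)| |apply: dmeasurable_if].
- apply: (dmeasurable_comp (fun v => inl (v, true))); apply: pairV => //.
  apply: (@dmeasurable_block_start _ n (fun y => Vn (itz (-1)%R y))).
  exact: (dmeasurable_iterz bT bTi hV (dmeasurable_cst _)).
- exact: (dmeasurable_block_next n hlab).
- apply: (dmeasurable_comp (fun v => inl (v, false))); apply: pairV => //.
  exact: (dmeasurable_block_next n hV).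
- exact: (dmeasurable_comp inr).
Qed.

Lemma dmeasurable_code_vertex n : dmeasurable (code_vertex T Tinv lab n).
Proof.
elim: n => [|n IH] /=; first exact: dmeasurable_cst.
exact: (dmeasurable_comp (@UA_tgt n) (dmeasurable_code_edge_of IH)).
Qed.

Lemma borel_coding (Y : set X) : borel_set Y ->
  forall B, UA_borel_set B -> borel_set (Y `&` coding T Tinv lab @^-1` B).
Proof.
move=> hY; apply: borel_preimage_UApath hY => n.
exact: (dmeasurable_code_edge_of (@dmeasurable_code_vertex n)).
Qed.

End CodingMeasurable.

Lemma bin_sum_lt n (b : nat -> bool) : (\sum_(0 <= e < n) b e * 2 ^ e < 2 ^ n)%N.
Proof.
elim: n => [|n IH]; first by rewrite big_geq.
by rewrite big_nat_recr //= expnS; case: (b n) => /=; lia.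
Qed.

Lemma bin_sum_inj n (b b' : nat -> bool) :
  (\sum_(0 <= e < n) b e * 2 ^ e = \sum_(0 <= e < n) b' e * 2 ^ e)%N ->
  forall e, (e < n)%N -> b e = b' e.
Proof.
elim: n => [|n IH] // h e; rewrite ltnS leq_eqVlt => /orP he.
move: h; rewrite !big_nat_recr //=.
have := bin_sum_lt n b; have := bin_sum_lt n b'.
set s := (\sum_(0 <= e < n) _)%N; set s' := (\sum_(0 <= e < n) _)%N.
move=> l' l h; have [eqn eqs] : b n = b' n /\ s = s'.
  by move: h l l'; case: (b n) (b' n) => [] [] /=; lia.
by case: he => [/eqP -> //|]; exact: IH.
Qed.

Section Labels.
Variables (R : realType) (X : metricType R).
Variables (T Tinv : X -> X).
Hypotheses (TK : cancel T Tinv) (TiK : cancel Tinv T).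
Hypothesis T_aperiodic : forall x (n : nat), (0 < n)%N -> iter n T x <> x.
Variable s : nat -> X.
Hypothesis s_dense :
  forall (x : X) (e : R), (0 < e)%R -> exists i, (mdist x (s i) < e)%R.

Local Notation itz := (iterz T Tinv).
Local Notation nested_marker := (nested_marker T Tinv s).
Local Notation marker_limit := (marker_limit T Tinv s).

Definition basic_ball (i : nat) : set X :=
  if @unpickle (nat * nat)%type i is Some (m, c)
  then [set y | (mdist (s c) y < ball_radius m)%R] else set0.

Lemma basic_ball_sep x y : x <> y -> exists i, basic_ball i x /\ ~ basic_ball i y.
Proof.
move=> xy; have d0 : (0 < mdist x y)%R by rewrite mdist_gt0; apply/eqP.
have [m hm] := ball_radius_small d0.
have [c hc] := s_dense x (ball_radius_gt0 R m).
exists (pickle (m, c)); rewrite /basic_ball pickleK; split => /=.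
  by rewrite metric_sym.
move=> hy; have := metric_triangle x (s c) y.
have := ball_radius_gt0 R m; lra.
Qed.

Definition code_width (k : nat) : nat := ((gap_bound k.+1).+1 * k)%N.
Definition code_range (k : nat) : nat := (2 ^ code_width k)%N.

Fixpoint level_offset (k : nat) : nat :=
  if k is k'.+1 then (level_offset k' + code_range k' * (gap_bound k'.+1).+1)%N
  else 0%N.

(* Bit [o * k + i] tells whether [T^o z] lies in the [i]-th basic ball. *)
Definition code_bit (k e : nat) (z : X) : bool :=
  `[< basic_ball (e %% k) (itz (Posz (e %/ k)) z) >].

Definition orbit_code (k : nat) (z : X) : nat :=
  (\sum_(0 <= e < code_width k) code_bit k e z * 2 ^ e)%N.

Definition stage (z : X) : nat := least (fun k => ~~ `[< nested_marker k.+1 z >]).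

Definition back_dist (k : nat) (z : X) : nat :=
  least (fun e => `[< nested_marker k.+1 (itz (- Posz e)%R z) >]).

(* The labels of points of stage [k] fill the interval
   [[level_offset k, level_offset k.+1)]; within it they record the distance
   back to level [k.+1] and the code of the next stretch of the orbit. *)
Definition label (z : X) : nat :=
  let k := stage z in
  (level_offset k + code_range k * back_dist k z + orbit_code k z)%N.

Lemma code_range_gt0 k : (0 < code_range k)%N.
Proof. by rewrite /code_range expn_gt0. Qed.

Lemma level_offset_mono k k' : (k <= k')%N -> (level_offset k <= level_offset k')%N.
Proof.
move=> /subnK <-; elim: (k' - k)%N => [|d IH] //=.
by apply: leq_trans IH _; rewrite leq_addr.
Qed.

Lemma level_offset_ltS k : (level_offset k < level_offset k.+1)%N.
Proof. by rewrite /= -{1}[level_offset k]addn0 ltn_add2l muln_gt0 code_range_gt0. Qed.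

Lemma level_offset_ge k : (k <= level_offset k)%N.
Proof. by elim: k => [|k IH] //; apply: leq_ltn_trans IH (level_offset_ltS k). Qed.

Lemma orbit_code_lt k z : (orbit_code k z < code_range k)%N.
Proof. exact: bin_sum_lt. Qed.

Lemma stage_spec z :
  ~ marker_limit z -> nested_marker (stage z) z /\ ~ nested_marker (stage z).+1 z.
Proof.
move=> hz; have [k hk] : exists k, ~ nested_marker k z.
  by apply/existsNP => h; apply: hz => k _; exact: h.
case: k hk => [|k] hk; first by exfalso; exact: hk.
have hP : ~~ `[< nested_marker k.+1 z >] by apply/negP => /asboolP.
have [h1 h2] := @leastP (fun k => ~~ `[< nested_marker k.+1 z >]) (ex_intro _ k hP).
split; last by move=> h; move/negP: h1; apply; exact/asboolP.
rewrite /stage; case: (least _) h2 => [|j] h2 //.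
apply: contrapT => h; have := h2 j; rewrite ltnn => hh.
suff : false by [].
by apply: hh; apply/negP => /asboolP.
Qed.

Lemma stage_ge z K : ~ marker_limit z -> nested_marker K z -> (K <= stage z)%N.
Proof.
move=> hz hK; rewrite leqNgt; apply/negP => lt.
have [_ h] := stage_spec hz; apply: h.
exact: (nested_marker_mono lt hK).
Qed.

Lemma back_dist_spec k z :
  [/\ (back_dist k z <= gap_bound k.+1)%N,
      nested_marker k.+1 (itz (- Posz (back_dist k z))%R z) &
      forall i : nat, (i < back_dist k z)%N -> ~ nested_marker k.+1 (itz (- Posz i)%R z)].
Proof.
have [j [jb hj]] := nested_marker_gap_back TK TiK T_aperiodic s_dense k.+1 z.
have hP : `[< nested_marker k.+1 (itz (- Posz j)%R z) >] by exact/asboolP.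
have [h1 h2] := @leastP (fun e => `[< nested_marker k.+1 (itz (- Posz e)%R z) >])
  (ex_intro _ j hP).
split; [exact: leq_trans (h2 _ hP) jb | exact/asboolP |].
move=> i hi hMi; have : (back_dist k z <= i)%N by apply: h2; exact/asboolP.
by rewrite leqNgt hi.
Qed.

Lemma label_range z :
  ~ marker_limit z -> (level_offset (stage z) <= label z < level_offset (stage z).+1)%N.
Proof.
move=> hz; rewrite /label /=.
have [h1 _ _] := back_dist_spec (stage z) z.
have := orbit_code_lt (stage z) z.
set k := stage z; set d := back_dist k z; set c := orbit_code k z; set D := code_range k.
move=> hc; apply/andP; split; first by rewrite -addnA leq_addr.
rewrite -addnA ltn_add2l; apply: (@leq_trans (D * d + D)); first by rewrite ltn_add2l.
by rewrite -mulnSr leq_mul2l ltnS h1 orbT.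
Qed.

Lemma label_ge z K : ~ marker_limit z -> nested_marker K z -> (level_offset K <= label z)%N.
Proof.
move=> hz hK; have /andP[h _] := label_range hz.
exact: leq_trans (level_offset_mono (stage_ge hz hK)) h.
Qed.

Lemma stage_of_label z k :
  ~ marker_limit z -> (level_offset k <= label z < level_offset k.+1)%N -> stage z = k.
Proof.
move=> hz /andP[h1 h2]; have /andP[h3 h4] := label_range hz.
by case: (ltngtP (stage z) k) => // /level_offset_mono; lia.
Qed.

Lemma label_decode z z' : ~ marker_limit z -> ~ marker_limit z' -> label z = label z' ->
  stage z = stage z' /\ orbit_code (stage z) z = orbit_code (stage z) z'.
Proof.
move=> hz hz' he.
have hs : stage z' = stage z.
  by apply: stage_of_label => //; rewrite -he; exact: label_range.
split => //; move: he; rewrite /label /= hs.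
have := orbit_code_lt (stage z) z; have := orbit_code_lt (stage z) z'.
set k := stage z; set a := orbit_code k z; set b := orbit_code k z' => hb ha he.
have : (code_range k * back_dist k z + a) %% code_range k =
       (code_range k * back_dist k z' + b) %% code_range k by congr modn; lia.
by rewrite !(mulnC (code_range k)) !modnMDl !modn_small.
Qed.

Lemma orbit_code_ball z z' k (o i : nat) :
  orbit_code k z = orbit_code k z' -> (o <= gap_bound k.+1)%N -> (i < k)%N ->
  (basic_ball i (itz (Posz o) z) <-> basic_ball i (itz (Posz o) z')).
Proof.
move=> hc ho hi.
have hlt : (o * k + i < code_width k)%N.
  rewrite /code_width; apply: (@leq_trans (o * k + k)); first by rewrite ltn_add2l.
  nia.
have := bin_sum_inj hc hlt; rewrite /code_bit.
have hk : (0 < k)%N by lia.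
rewrite modnMDl modn_small // divnMDl // divn_small // addn0.
by move=> h; split => hu; move: h;
  [rewrite asboolT // => /esym/asboolP | rewrite (asboolT hu) => /asboolP].
Qed.

End Labels.

Section LabelsOnXhat.
Variables (R : realType) (X : metricType R).
Variables (T Tinv : X -> X).
Hypotheses (TK : cancel T Tinv) (TiK : cancel Tinv T).
Hypotheses (bT : borel_fun T) (bTi : borel_fun Tinv).
Hypothesis T_aperiodic : forall x (n : nat), (0 < n)%N -> iter n T x <> x.
Variable s : nat -> X.
Hypothesis s_dense :
  forall (x : X) (e : R), (0 < e)%R -> exists i, (mdist x (s i) < e)%R.

Local Notation itz := (iterz T Tinv).
Local Notation itzD := (iterzD TK TiK).
Local Notation nested_marker := (nested_marker T Tinv s).
Local Notation marker_limit := (marker_limit T Tinv s).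
Local Notation label := (label T Tinv s).
Local Notation stage := (stage T Tinv s).
Local Notation back_dist := (back_dist T Tinv s).
Local Notation orbit_code := (orbit_code T Tinv s).

Local Notation Xhat := (orbit_avoid T Tinv marker_limit).

Lemma label_back x n : Xhat x -> exists a : nat, (n <= label (itz (- Posz a)%R x))%N.
Proof.
move=> hx; have [j [_ hj]] := nested_marker_gap_back TK TiK T_aperiodic s_dense n x.
exists j; apply: leq_trans (level_offset_ge n) _.
exact: (label_ge TK TiK T_aperiodic s_dense (hx _) hj).
Qed.

Lemma label_fwd x n : Xhat x -> exists b : nat, (n <= label (itz (Posz b.+1) x))%N.
Proof.
move=> hx; have [e [_ he]] := nested_marker_gap_fwd TK TiK T_aperiodic s_dense n (itz 1 x).
exists e; apply: leq_trans (level_offset_ge n) _.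
rewrite itzD (_ : (Posz e + 1)%R = Posz e.+1) in he; last by lia.
exact: (label_ge TK TiK T_aperiodic s_dense (hx _) he).
Qed.

Lemma back_dist_iterz k z (j : nat) :
  (forall i : nat, (0 < i <= j)%N -> ~ nested_marker k.+1 (itz (Posz i) z)) ->
  back_dist k (itz (Posz j) z) = (back_dist k z + j)%N.
Proof.
move=> hno; have [_ d2 d3] := back_dist_spec TK TiK T_aperiodic s_dense k z.
apply: least_eq; first by apply/asboolP; rewrite itzD; move: d2; iterz_lia.
move=> i hi; apply/negP => /asboolP; rewrite itzD => hM.
case: (ltnP i j) => hij.
  by apply: (hno (j - i)%N); [lia | move: hM; iterz_lia].
by apply: (d3 (i - j)%N); [lia | move: hM; iterz_lia].
Qed.

(* Two points of the same label have the same stage [k] and the same distance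
   back to level [k.+1], so a point of level [k.+1] lies strictly between them;
   its stage, hence its label, is larger. *)
Lemma label_between z n (j : nat) : Xhat z -> label z = n ->
  label (itz (Posz j) z) = n -> (1 <= j)%N ->
  exists i : nat, (0 < i < j)%N /\ (n <= label (itz (Posz i) z))%N.
Proof.
move=> hz h1 h2 hj.
have nz : ~ marker_limit z := hz 0%R; have nz' := hz (Posz j).
have [hs hc] := label_decode TK TiK T_aperiodic s_dense nz nz' (etrans h1 (esym h2)).
set k := stage z in hs hc.
case: (pselect (exists i : nat, (0 < i <= j)%N /\ nested_marker k.+1 (itz (Posz i) z))).
  move=> [i [hi hM]]; have hij : i != j.
    by apply/eqP => eij; subst i; have [_] := stage_spec nz'; rewrite -hs; apply.
  exists i; split; first lia.
  have := label_range TK TiK T_aperiodic s_dense nz; rewrite -/k h1 => /andP[_ hlt].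
  have := label_ge TK TiK T_aperiodic s_dense (hz (Posz i)) hM; lia.
move=> hno; exfalso.
have hdd := @back_dist_iterz k z j (fun i hi hM => hno (ex_intro _ i (conj hi hM))).
have := orbit_code_lt T Tinv s k z; have := code_range_gt0 k.
by move: h1 h2; rewrite /label /= -hs -/k hdd -hc; nia.
Qed.

Lemma dmeasurable_stage : dmeasurable stage.
Proof.
apply: (dmeasurable_least (Q := fun k z => ~~ `[< nested_marker k.+1 z >])) => k.
exact: (dmeasurable_asbool (borel_nested_marker bT bTi s k.+1) negb).
Qed.

Lemma dmeasurable_back_dist k : dmeasurable (back_dist k).
Proof.
apply: (dmeasurable_least (Q := fun e z => `[< nested_marker k.+1 (itz (- Posz e)%R z) >])).
move=> e; have hM := dmeasurable_asbool (borel_nested_marker bT bTi s k.+1).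
exact: (dmeasurable_iterz bT bTi hM (dmeasurable_cst _) id).
Qed.

Lemma dmeasurable_orbit_code k : dmeasurable (orbit_code k).
Proof.
rewrite /orbit_code; elim: (code_width k) => [|m IH].
  by under eq_fun do rewrite big_geq //; exact: dmeasurable_cst.
under eq_fun do rewrite big_nat_recr //=; apply: dmeasurable_addn => //.
apply: (dmeasurable_comp (fun b : bool => b * 2 ^ m)%N).
apply: (dmeasurable_iterz bT bTi (f := fun y => `[< basic_ball s (m %% k) y >])).
  by apply: dmeasurable_asbool; apply: borel_open; rewrite /basic_ball;
    case: unpickle => [[? ?]|]; [exact: open_mdist_ball | exact: open0].
exact: dmeasurable_cst.
Qed.

Lemma dmeasurable_label : dmeasurable label.
Proof.
apply: (dmeasurable_bind (en := id) _ (h := stage)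
  (g := fun k z => (level_offset k + code_range k * back_dist k z + orbit_code k z)%N)).
- by move=> a; exists a.
- exact: dmeasurable_stage.
move=> k; apply: dmeasurable_addn; last exact: dmeasurable_orbit_code.
apply: (dmeasurable_comp (fun d => level_offset k + code_range k * d)%N).
exact: dmeasurable_back_dist.
Qed.

End LabelsOnXhat.

Section InvariantProbability.
Variables (R : realType) (X : topologicalType).
Variables (T Tinv : X -> X).
Hypotheses (TK : cancel T Tinv) (TiK : cancel Tinv T).
Hypotheses (bT : borel_fun T) (bTi : borel_fun Tinv).
Local Notation itz := (iterz T Tinv).
Variable P : set X -> \bar R.
Hypothesis P_prob : borel_probability P.
Hypothesis P_inv : forall A, borel_set A -> P (T @^-1` A) = P A.

Lemma prob_ge0 A : borel_set A -> (0 <= P A)%E.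
Proof. by case: P_prob => _ + _ _; apply. Qed.

Lemma prob_bigcup_finite (F : nat -> set X) (n : nat) :
  (forall i, borel_set (F i)) -> trivIset setT F -> (forall i, (n <= i)%N -> F i = set0) ->
  P (\bigcup_i F i) = (\sum_(0 <= i < n) P (F i))%E.
Proof.
move=> hF htr h0; case: P_prob => P0 _ hadd _.
apply: (cvg_unique (@ereal_hausdorff R) (hadd F hF htr)).
apply: cvg_near_cst; exists n => // m /= hm.
rewrite (big_cat_nat (leq0n n) hm) /= [X in (_ + X)%E]big1_seq ?adde0 //.
by move=> i; rewrite mem_index_iota => /andP[_ /andP[hi _]]; rewrite h0.
Qed.

Lemma prob_setU A B : borel_set A -> borel_set B -> A `&` B = set0 ->
  P (A `|` B) = (P A + P B)%E.
Proof.
move=> hA hB hAB.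
pose F i := if i == 0%N then A else if i == 1%N then B else set0.
have -> : A `|` B = \bigcup_i F i.
  apply/seteqP; split => x /=; first by case=> h; [exists 0%N | exists 1%N].
  by case=> -[|[|i]] _ //=; [left|right].
rewrite (@prob_bigcup_finite F 2).
- by rewrite big_nat_recr //= big_nat_recr //= big_geq // add0e.
- by move=> -[|[|i]] //=; exact: borel_set0.
- move=> i j _ _ [x [hi hj]]; move: hi hj; rewrite /F.
  case: i => [|[|i]] //=; case: j => [|[|j]] //= hi hj;
  by exfalso; move: hAB; rewrite -subset0 => /(_ x); apply; split.
- by move=> -[|[|i]].
Qed.

Lemma prob_le1 A : borel_set A -> (P A <= 1)%E.
Proof.
move=> hA; have := prob_setU hA (borel_setC hA) (setICr A).
rewrite setUCr; case: P_prob => _ _ _ -> ->.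
by rewrite leeDl // prob_ge0 //; exact: borel_setC.
Qed.

Lemma prob_iterz j A : borel_set A -> P (itz j @^-1` A) = P A.
Proof.
have P_invTi B : borel_set B -> P (Tinv @^-1` B) = P B.
  move=> hB; rewrite -(P_inv (bTi hB)); congr P.
  by apply/seteqP; split => x /=; rewrite TK.
have P_iter (f : X -> X) n : borel_fun f ->
    (forall B, borel_set B -> P (f @^-1` B) = P B) ->
    forall B, borel_set B -> P (iter n f @^-1` B) = P B.
  move=> hf hinv; elim: n => [|n IH] B hB //=.
  by rewrite -(hinv _ hB) -(IH _ (hf _ hB)).
by case: j => n hA /=; [exact: P_iter | exact: P_iter].
Qed.

Variable D : set X.
Hypothesis borel_D : borel_set D.
Hypothesis D_wandering : forall x j, D x -> D (itz j x) -> j = 0%R.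

Let translate (n : nat) : set X := itz (int_of_nat n) @^-1` D.

Let borel_translate n : borel_set (translate n).
Proof. exact: borel_iterz. Qed.

Let translate_trivIset : trivIset setT translate.
Proof.
move=> i j _ _ [x [hi hj]]; apply: int_of_nat_inj.
have := D_wandering (j := (int_of_nat j - int_of_nat i)%R) hi.
by rewrite iterzD // subrK => /(_ hj); lia.
Qed.

(* Infinitely many disjoint translates of [D] have the same measure. *)
Lemma prob_wandering : P D = 0%E.
Proof.
have hfin : P D = (fine (P D))%:E.
  by rewrite fineK // ge0_fin_numE ?prob_ge0 // (le_lt_trans (prob_le1 borel_D)) // ltey.
have hle (n : nat) : (n%:R * fine (P D) <= 1)%R.
  pose G i := if (i < n)%N then translate i else set0.
  have hG i : borel_set (G i) by rewrite /G; case: ifP => _ //; exact: borel_set0.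
  have htrG : trivIset setT G.
    move=> i j _ _ [x []]; rewrite /G; case: ifP => // _; case: ifP => // _ hi hj.
    by apply: translate_trivIset => //; exists x.
  rewrite -lee_fin; apply: le_trans (prob_le1 (borel_bigcup hG)).
  rewrite (@prob_bigcup_finite G n) //; last by move=> i hi; rewrite /G ltnNge hi.
  rewrite big_nat_cond (eq_bigr (fun=> (fine (P D))%:E)); last first.
    by move=> i /andP[/andP[_ hi] _]; rewrite /G hi prob_iterz -?hfin.
  by rewrite -big_nat_cond sumEFin sumr_const_nat subn0 mulr_natl.
have hge : (0 <= fine (P D))%R by rewrite -lee_fin -hfin prob_ge0.
rewrite hfin; congr (_%:E); apply/eqP; rewrite eq_le hge andbT leNgt.
apply/negP => rpos.
have hb : (0 <= (fine (P D))^-1)%R by rewrite invr_ge0 ltW.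
move/archi_boundP: hb => hb.
have := hle (Num.Def.archi_bound (fine (P D))^-1).
rewrite -(ltr_pM2r rpos) mulVf ?gt_eqF // in hb.
by rewrite leNgt hb.
Qed.

Lemma prob_orbit_avoid : P (orbit_avoid T Tinv D) = 1%E.
Proof.
have hXc : ~` orbit_avoid T Tinv D = \bigcup_n translate n.
  apply/seteqP; split => x /=.
    move=> /existsNP[j /contrapT hj]; have [n hn] := int_of_nat_surj j.
    by exists n => //; rewrite /translate /= hn.
  by case=> n _ hn h; exact: (h _ hn).
have hXc0 : P (~` orbit_avoid T Tinv D) = 0%E.
  case: P_prob => _ _ hadd _; rewrite hXc.
  apply: (cvg_unique (@ereal_hausdorff R) (hadd _ borel_translate translate_trivIset)).
  apply: cvg_near_cst; exists 0%N => // m _ /=.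
  by rewrite big1 // => i _; rewrite prob_iterz // prob_wandering.
have hA := borel_orbit_avoid bT bTi borel_D.
have := prob_setU hA (borel_setC hA) (setICr _).
by rewrite setUCr hXc0 adde0; case: P_prob => _ _ _ ->.
Qed.

End InvariantProbability.

Section Construction.
Variables (R : realType) (X : metricType R).
Variables (T Tinv : X -> X).
Hypotheses (TK : cancel T Tinv) (TiK : cancel Tinv T).
Hypotheses (bT : borel_fun T) (bTi : borel_fun Tinv).
Hypothesis T_aperiodic : forall x (n : nat), (0 < n)%N -> iter n T x <> x.
Variable s : nat -> X.
Hypothesis s_dense :
  forall (x : X) (e : R), (0 < e)%R -> exists i, (mdist x (s i) < e)%R.

Local Notation itz := (iterz T Tinv).
Local Notation itzD := (iterzD TK TiK).
Local Notation Xhat := (orbit_avoid T Tinv (marker_limit T Tinv s)).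
Local Notation lab := (label T Tinv s).
Local Notation block_start := (block_start T Tinv lab).
Local Notation back := (back T Tinv lab).
Local Notation coding := (coding T Tinv lab).

Let Xhat_itz := orbit_avoid_iterz TK TiK (D := marker_limit T Tinv s).
Let lab_back := label_back TK TiK T_aperiodic s_dense.
Let lab_fwd := label_fwd TK TiK T_aperiodic s_dense.
Let lab_between := label_between TK TiK T_aperiodic s_dense.

(* If [x] and [y] have the same coding, the block starts [z], [z'] of [x], [y]
   at a level [n >= level_offset i.+1] carry the same label; hence they have
   the same stage [k > i] and the same orbit code, which records whether
   [x = T^(back n x) z] lies in the [i]-th basic ball, and likewise for [y]. *)
Lemma coding_inj x y : Xhat x -> Xhat y -> coding x = coding y -> x = y.
Proof.
move=> hx hy hxy; apply: contrapT => /(basic_ball_sep s_dense)[i [hUx hUy]].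
apply: hUy; have [hn0 hst] := block_start_label lab_back (level_offset i.+1) hx.
set n := lab (block_start _ x) in hn0 hst.
have hRx : lab (block_start n x) = n by rewrite hst.
have [hRy hba] :=
  coding_eq_block_start TK TiK Xhat_itz lab_back lab_fwd lab_between hx hy hxy hRx.
set z := block_start n x; set z' := block_start n y.
have [hsg hcd] :=
  label_decode TK TiK T_aperiodic s_dense (hx _) (hy _) (etrans hRx (esym hRy)).
set k := stage T Tinv s z in hsg hcd.
have := @label_range _ _ _ _ TK TiK T_aperiodic _ s_dense z (hx _).
rewrite -/k hRx => /andP[_ hlt].
have hik : (i < k)%N.
  by rewrite ltnNge; apply/negP => /(@level_offset_mono k.+1 i.+1); lia.
have hback : (back n x <= gap_bound k.+1)%N.
  have [j [jb hj]] := nested_marker_gap_back TK TiK T_aperiodic s_dense k.+1 x.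
  apply: leq_trans jb; apply: back_le.
  by have := label_ge TK TiK T_aperiodic s_dense (hx _) hj; lia.
have := orbit_code_ball hcd hback hik.
rewrite /z /z' /block_start -hba !itzD !addrN.
by case=> + _; apply.
Qed.

Lemma Xhat_metrically_universal : metrically_universal (R := R) T Xhat.
Proof.
move=> P [P_prob P_inv _].
apply: (prob_orbit_avoid TK TiK bT bTi P_prob P_inv (borel_marker_limit bT bTi s)).
exact: marker_limit_wandering.
Qed.

Lemma Xhat_coding_spec :
  borel_set Xhat /\
  metrically_universal (R := R) T Xhat /\
  (forall x, Xhat x -> Xhat (T x)) /\
  (forall B, UA_borel_set B -> borel_set (Xhat `&` coding @^-1` B)) /\
  (forall x y, Xhat x -> Xhat y -> coding x = coding y -> x = y) /\
  (forall x, Xhat x -> adic_shift_defined (coding x)) /\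
  (forall x, Xhat x -> adic_shift_graph (coding x) (coding (T x))).
Proof.
have hXhat : borel_set Xhat by apply: borel_orbit_avoid => //; exact: borel_marker_limit.
split=> //; split; first exact: Xhat_metrically_universal.
split; first by move=> x hx; exact: (Xhat_itz (j := 1%R) hx).
split; first exact: (borel_coding bT bTi (dmeasurable_label bT bTi s) hXhat).
split; first exact: coding_inj.
split => x hx.
  exact: (coding_shift_defined TK TiK Xhat_itz lab_back lab_fwd lab_between hx).
exact: (coding_shift TK TiK Xhat_itz lab_back lab_fwd lab_between hx).
Qed.

End Construction.

Lemma separable_dense_seq (R : realType) (X : metricType R) (x0 : X) :
  separable_space X ->
  exists s : nat -> X, forall x (e : R), (0 < e)%R -> exists i, (mdist x (s i) < e)%R.
Proof.
case=> S [/countable_injP[f hf] dS].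
pose s k := if pselect (exists x, S x /\ f x = k) is left h then proj1_sig (cid h) else x0.
exists s => x e e0.
have [y [hy1 hy2]] : [set y | (mdist x y < e)%R] `&` S !=set0.
  by apply: dS; [exists x => /=; rewrite mdistxx | exact: open_mdist_ball].
exists (f y); rewrite /s; case: pselect => [h|h]; last by exfalso; apply: h; exists y.
by case: (cid h) => x' [hx'1 hx'2] /=; rewrite (hf x' y) // inE.
Qed.

Lemma aperiodic_iter (X : Type) (T : X -> X) :
  aperiodic T -> forall x (n : nat), (0 < n)%N -> iter n T x <> x.
Proof.
move=> hap x n n0 hx; suff : periodic_points T x by rewrite hap.
by exists n.
Qed.

Fixpoint UA_copy_vertex (n : nat) : UAV n :=
  match n return UAV n with 0 => tt | n'.+1 => inr (UA_copy_vertex n') end.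

Definition UA_copy_path : UApath :=
  @exist (forall n : nat, UAE n) (fun p => forall n, UA_src (p n.+1) = UA_tgt (p n))
    (fun n => inr (UA_copy_vertex n)) (fun n => erefl).

Theorem theorem1 (R : realType) (X : metricType R)
    (hsep : separable_space X) (T : X -> X)
    (hT : borel_automorphism T) (hap : aperiodic T) :
  exists (Xh : set X) (Phi : X -> UApath),
    borel_set Xh /\
    metrically_universal (R := R) T Xh /\
    (forall x, Xh x -> Xh (T x)) /\
    (forall B, UA_borel_set B -> borel_set (Xh `&` Phi @^-1` B)) /\
    (forall x y, Xh x -> Xh y -> Phi x = Phi y -> x = y) /\
    (forall x, Xh x -> adic_shift_defined (Phi x)) /\
    (forall x, Xh x -> adic_shift_graph (Phi x) (Phi (T x))).
Proof.
case: hT => bT [Tinv [TK TiK bTi]].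
have [[x0 _]|hempty] := pselect (exists x : X, True).
  have [s s_dense] := separable_dense_seq x0 hsep.
  by do 2 eexists; exact: (Xhat_coding_spec TK TiK bT bTi (aperiodic_iter hap) s_dense).
exists set0, (fun=> UA_copy_path); split; first exact: borel_set0.
split.
  move=> P [[_ _ _ P1] _ _]; rewrite -P1; congr P.
  by apply/seteqP; split => x // _; apply: hempty; exists x.
split; first by move=> x [].
split; first by move=> B _; rewrite set0I; exact: borel_set0.
split; first by move=> x y [].
by split => x [].
Qed.
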